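(* Let $\epsilon:B\to A$ be a local augmentation and let $\alpha$, $\beta$ be invertible matrices over $B$ of sizes $n\times n$ and $m\times m$ with $\epsilon(\alpha)$ and $\epsilon(\beta)$ identity matrices. Then $D(\alpha\oplus\beta)=D(\alpha)D(\beta)$ in $\epsilon^{-1}(1)/C_0$.
   Context: Rings are associative with $1$. A local augmentation is a ring homomorphism $\epsilon:B\to A$ with a ring homomorphism $j:A\to B$, $\epsilon j=\mathrm{id}_A$, such that every square matrix over $B$ whose image under $\epsilon$ is invertible is itself invertible. $C_0$ is the subgroup of units of $B$ generated by $\{(1+ab)(1+ba)^{-1}\mid a,b\in B,\ \epsilon(a)=0\}$; it is a normal subgroup of $\epsilon^{-1}(1)$ with abelian quotient. $\alpha\oplus\beta$ is the block diagonal matrix. For an invertible $n\times n$ matrix $\gamma$ over $B$ with $\epsilon(\gamma)$ the identity, $D(\gamma)\in\epsilon^{-1}(1)/C_0$ is defined recursively: if $n=1$, $D(\gamma)$ is the class of $\gamma$; if $n\ge2$, write $\gamma=\begin{pmatrix}\gamma_{11}&\gamma_{12}\\ \gamma_{21}&\gamma_{22}\end{pmatrix}$ with $\gamma_{11}$ of size $1\times1$ (invertible since $\epsilon(\gamma_{11})=1$) and set $D(\gamma)=\gamma_{11}D(\gamma_{22}-\gamma_{21}\gamma_{11}^{-1}\gamma_{12})$. *)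

From HB Require Import structures.
From mathcomp Require Import all_boot all_order all_algebra.
Set Implicit Arguments. Unset Strict Implicit. Unset Printing Implicit Defensive.
Import GRing.Theory.
Local Open Scope ring_scope.

Definition mx_invertible (R : pzRingType) (n : nat) (M : 'M[R]_n) : Prop :=
  exists N : 'M[R]_n, M *m N = 1%:M /\ N *m M = 1%:M.

Definition local_augmentation (B A : nzRingType)
    (eps : {rmorphism B -> A}) (j : {rmorphism A -> B}) : Prop :=
  (forall a : A, eps (j a) = a) /\
  (forall (n : nat) (M : 'M[B]_n), mx_invertible (map_mx eps M) -> mx_invertible M).

Inductive inC0 (B : unitRingType) (A : nzRingType) (eps : {rmorphism B -> A}) : B -> Prop :=
  | C0_gen a b : eps a = 0 -> inC0 eps ((1 + a * b) * (1 + b * a)^-1)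
  | C0_one : inC0 eps 1
  | C0_mul x y : inC0 eps x -> inC0 eps y -> inC0 eps (x * y)
  | C0_inv x : inC0 eps x -> inC0 eps x^-1.

(* Equality of classes x C_0 = y C_0 in eps^{-1}(1)/C_0. *)
Definition eqC0 (B : unitRingType) (A : nzRingType) (eps : {rmorphism B -> A})
    (x y : B) : Prop := inC0 eps (x * y^-1).

(* Representative in B of D(gamma) for gamma of size n.+1. *)
Fixpoint Drep (B : unitRingType) (n : nat) : 'M[B]_n.+1 -> B :=
  match n return 'M[B]_n.+1 -> B with
  | 0 => fun M => M ord0 ord0
  | k.+1 => fun M =>
      let M' : 'M[B]_(1 + k.+1) := M in
      let g11 := ulsubmx M' ord0 ord0 in
      g11 * Drep (drsubmx M' - dlsubmx M' *m (g11^-1 *: ursubmx M'))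
  end.

From HB Require Import structures.
From mathcomp Require Import all_boot all_order all_algebra.
Set Implicit Arguments. Unset Strict Implicit. Unset Printing Implicit Defensive.
Import GRing.Theory.
Local Open Scope ring_scope.

(* The first pivot of
   diag(alpha, beta) is that of alpha, and since the off-diagonal blocks vanish
   its Schur complement is diag(alpha', beta), with alpha' the Schur complement
   in alpha. By induction on the size of alpha, D(diag(alpha, beta)) =
   D(alpha) D(beta) holds already in B; this element is a unit because eps maps
   it to 1 and eps is local, so its class modulo C_0 is the same. *)

Section SchurDeterminant.

Variable B : unitRingType.

(* Describing square matrices by functions on nat x nat avoids the casts
   between 'M_(1 + n) and 'M_n.+1 that the recursion of Drep relies on. *)
Definition mx_of_fun n (f : nat -> nat -> B) : 'M[B]_n.+1 :=
  \matrix_(i, j) f i j.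

Lemma mx_of_funE n (M : 'M[B]_n.+1) :
  M = mx_of_fun n (fun i j => M (inord i) (inord j)).
Proof. by apply/matrixP => i j; rewrite mxE !inord_val. Qed.

Lemma eq_Drep_mx_of_fun n (f g : nat -> nat -> B) :
  f =2 g -> Drep (mx_of_fun n f) = Drep (mx_of_fun n g).
Proof. by move=> fg; congr Drep; apply/matrixP => i j; rewrite !mxE fg. Qed.

Lemma Drep_mx_of_funS n (f : nat -> nat -> B) :
  Drep (mx_of_fun n.+1 f) = f 0%N 0%N * Drep (mx_of_fun n (fun i j =>
     f i.+1 j.+1 - f i.+1 0%N * (f 0%N 0%N)^-1 * f 0%N j.+1)).
Proof.
rewrite [LHS]/=.
have -> : ulsubmx (mx_of_fun n.+1 f : 'M_(1 + n.+1)) ord0 ord0 = f 0%N 0%N.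
  by rewrite !mxE.
congr (_ * Drep _).
by apply/matrixP => i j; rewrite !mxE big_ord1 !mxE mulrA.
Qed.

Definition diag_block_fun k (f g : nat -> nat -> B) i j : B :=
  if (i < k)%N then (if (j < k)%N then f i j else 0)
  else (if (j < k)%N then 0 else g (i - k)%N (j - k)%N).

Lemma Drep_diag_block_fun k m (f g : nat -> nat -> B) :
  Drep (mx_of_fun (k + m.+1) (diag_block_fun k.+1 f g))
  = Drep (mx_of_fun k f) * Drep (mx_of_fun m g).
Proof.
elim: k f => [|k IHk] f.
  rewrite add0n Drep_mx_of_funS [in RHS]/= mxE; congr (_ * _).
  apply: eq_Drep_mx_of_fun => i j.
  by rewrite /diag_block_fun /= !subn1 /= mulr0 subr0.
rewrite addSn !Drep_mx_of_funS -mulrA -IHk; congr (_ * _).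
apply: eq_Drep_mx_of_fun => i j; rewrite /diag_block_fun /= !ltnS.
by case: (i <= k)%N; case: (j <= k)%N; rewrite ?subSS ?mulr0 ?mul0r ?subr0.
Qed.

Lemma block_diag_mx_of_fun n m (alpha : 'M[B]_n.+1) (beta : 'M[B]_m.+1) :
  block_mx alpha 0 0 beta = mx_of_fun (n + m.+1)
    (diag_block_fun n.+1 (fun i j => alpha (inord i) (inord j))
                         (fun i j => beta (inord i) (inord j))) :> 'M_(n.+1 + m.+1).
Proof.
apply/matrixP => i j; rewrite [RHS]mxE /diag_block_fun.
case: (split_ordP i) => i' ->; case: (split_ordP j) => j' ->;
  rewrite ?block_mxEul ?block_mxEur ?block_mxEdl ?block_mxEdr ?mxE /=
          ?ltn_ord ?ltnNge ?leq_addr /= ?addKn ?inord_val //.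
Qed.

Lemma Drep_block_diag n m (alpha : 'M[B]_n.+1) (beta : 'M[B]_m.+1) :
  Drep (n := n + m.+1) (block_mx alpha 0 0 beta) = Drep alpha * Drep beta.
Proof.
by rewrite block_diag_mx_of_fun Drep_diag_block_fun -!mx_of_funE.
Qed.

Variables (A : nzRingType) (eps : {rmorphism B -> A}).

Lemma eps_Drep_mx_of_fun n (f : nat -> nat -> B) :
  (forall i j, i <= n -> j <= n -> eps (f i j) = (i == j)%:R)%N ->
  eps (Drep (mx_of_fun n f)) = 1.
Proof.
elim: n f => [|n IHn] f f_id; first by rewrite /= mxE f_id.
rewrite Drep_mx_of_funS rmorphM f_id // mul1r; apply: IHn => i j lein lejn.
by rewrite rmorphB !rmorphM !f_id // eqSS mulr0 subr0.
Qed.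

Lemma eps_Drep n (M : 'M[B]_n.+1) : map_mx eps M = 1%:M -> eps (Drep M) = 1.
Proof.
move=> /matrixP epsM; rewrite (mx_of_funE M); apply: eps_Drep_mx_of_fun => i j lein lejn.
have := epsM (inord i) (inord j); rewrite !mxE => ->.
by rewrite -(inj_eq val_inj) /= !inordK.
Qed.

Lemma eqC0_refl x : x \is a GRing.unit -> eqC0 eps x x.
Proof. by move=> x_unit; rewrite /eqC0 mulrV //; apply: C0_one. Qed.

End SchurDeterminant.

Lemma local_augmentation_unit (B : unitRingType) (A : nzRingType)
    (eps : {rmorphism B -> A}) (j : {rmorphism A -> B}) (x : B) :
  local_augmentation eps j -> eps x = 1 -> x \is a GRing.unit.
Proof.
move=> [_ eps_local] epsx.
have [y [xy yx]] : mx_invertible (x%:M : 'M_1).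
  by apply: eps_local; exists 1%:M; rewrite mul1mx mulmx1 map_scalar_mx epsx.
apply/unitrP; exists (y ord0 ord0).
by move/matrixP: xy => /(_ ord0 ord0); move/matrixP: yx => /(_ ord0 ord0);
  rewrite !mxE !big_ord1 !mxE !eqxx !mulr1n.
Qed.

Theorem lemma4p4 (B : unitRingType) (A : nzRingType)
    (eps : {rmorphism B -> A}) (j : {rmorphism A -> B})
    (n m : nat) (alpha : 'M[B]_n.+1) (beta : 'M[B]_m.+1) :
  local_augmentation eps j ->
  mx_invertible alpha -> mx_invertible beta ->
  map_mx eps alpha = 1%:M -> map_mx eps beta = 1%:M ->
  eqC0 eps (Drep (n := n + m.+1) (block_mx alpha 0 0 beta))
           (Drep alpha * Drep beta).
Proof.
move=> eps_local _ _ eps_alpha eps_beta.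
rewrite Drep_block_diag; apply: eqC0_refl.
apply: (local_augmentation_unit eps_local).
by rewrite rmorphM !eps_Drep // mulr1.
Qed.
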